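(* With the matrices defined in the context, $B\,Q_\beta=V_\beta\,B$; i.e. the diagram $C_1\xrightarrow{B}C_0$, $Q_\beta:C_1\to C_1$, $V_\beta:C_0\to C_0$, $C_1\xrightarrow{B}C_0$ commutes.
   Context: Setting. $I\subset\mathbb{R}$ compact interval; $f_i(x)=\rho_ix+\varrho_i$ ($i=1,\dots,n$), $0<|\rho_i|<1$, IFS with open set condition; $I$ is the union of a nonempty open interval $I_h$ (hole) and $f_1(I),\dots,f_n(I)$, with pairwise disjoint interiors and $I_h$ disjoint from the $f_i(I)$; $F(x)=f_i^{-1}(x)$ on $f_i(I)$. The laps and hole have endpoints $a_1<\dots<a_{n+2}$, hole $(a_h,a_{h+1})$; interior endpoints are turning/discontinuity points. Assume the forward orbit of every one-sided endpoint $a_i^\pm$ is finite. Markov partition: the orbit points and the $a_i$ cut $I$ into intervals $J_1,\dots,J_m$; $A=[a_{ij}]$, $a_{ij}=1$ iff $F(\mathrm{int}J_j)\supseteq\mathrm{int}J_i$; $Q_\beta=[a_{ij}|F'|_{J_j}|^{-\beta}]$, $\beta\in\mathbb{R}$. Points $y^{(1)},\dots,y^{(q)}$: the one-sided endpoints $a_1^+,a_2^-,a_2^+,\dots,a_{n+2}^-$ (with $a_i^-,a_i^+$ consecutive) together with all other points of their forward orbits, ordered along $I$; $C_0=\mathbb{R}^q$ with $y^{(i)}$ the $i$-th standard basis vector, $C_1=\mathbb{R}^m$ with basis $J_1,\dots,J_m$. $B$ is the $q\times m$ matrix with, in column $j$, $-1$ in row $i$ and $+1$ in row $i+1$ where $y^{(i)},y^{(i+1)}$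 are the lower and upper endpoints of $J_j$ (border map $\partial J_j=y^{(i+1)}-y^{(i)}$), other entries $0$. $V_\beta=[v_{ij}]$ ($q\times q$): if $F(y^{(j)})=y^{(i)}$, $v_{ij}=\varepsilon(y^{(j)})|F'(y^{(j)})|^{-\beta}$ with $\varepsilon$ the sign of $F'$ at $y^{(j)}$ (column zero for limits from inside the hole); for every pair of consecutive entries that are the two one-sided versions of a turning/discontinuity point between $y^{(j)}$ and $y^{(i)}$: if $y^{(i)}>y^{(j)}$, pair $y^{(k)},y^{(k+1)}$, $j\le k<i$, set $v_{kj}=v_{ij}$, $v_{k+1,j}=-v_{ij}$; if $y^{(i)}<y^{(j)}$, pair $y^{(k-1)},y^{(k)}$, $i<k\le j$, set $v_{k-1,j}=-v_{ij}$, $v_{kj}=v_{ij}$; all other entries $0$. *)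

From HB Require Import structures.
From mathcomp Require Import all_boot all_order all_algebra.
From mathcomp Require Import all_classical all_reals all_analysis.
Set Implicit Arguments. Unset Strict Implicit. Unset Printing Implicit Defensive.
Import Order.TTheory GRing.Theory Num.Theory numFieldNormedType.Exports.
Local Open Scope ring_scope.
Local Open Scope classical_set_scope.

Section HoleIFS.
Variable R : realType.
Variable n : nat.
(* IFS f_i(x) = rho_i x + varrho_i, i : 'I_n (0-based);  I = [c,d];
   hole I_h = (hl,hr). *)
Variables (rho varrho : 'I_n -> R) (c d hl hr : R).

(* one-sided points: (x,false) = x^-  (limit from the left),
                     (x,true)  = x^+  (limit from the right) *)
Definition pt := (R * bool)%type.

Definition fi (i : 'I_n) (x : R) : R := rho i * x + varrho i.
Definition Finv (i : 'I_n) (x : R) : R := (x - varrho i) / rho i.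

Definition Iset : set R := [set x | c <= x <= d].
Definition hole : set R := [set x | hl < x < hr].
Definition lap (i : 'I_n) : set R := fi i @` Iset.

Definition open_set_condition : Prop :=
  exists U : set R, [/\ open U, U !=set0,
    (forall i, fi i @` U `<=` U) &
    (forall i j, i != j -> fi i @` U `&` fi j @` U = set0)].

Definition lapmin (i : 'I_n) : R := Num.min (fi i c) (fi i d).
Definition lapmax (i : 'I_n) : R := Num.max (fi i c) (fi i d).

(* the lap on whose side the one-sided point lies (None: hole / outside) *)
Definition lap_of_pt (p : pt) : option 'I_n :=
  [pick i | if p.2 then (lapmin i <= p.1) && (p.1 < lapmax i)
            else (lapmin i < p.1) && (p.1 <= lapmax i)].

Definition Fpt (p : pt) : option pt :=
  if lap_of_pt p is Some i then
    Some (Finv i p.1, if 0 < rho i then p.2 else ~~ p.2)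
  else None.

Definition Fder (p : pt) : R :=
  if lap_of_pt p is Some i then (rho i)^-1 else 0.

Definition iterF (k : nat) (p : pt) : option pt :=
  iter k (fun o => obind Fpt o) (Some p).

Definition Evals : seq R :=
  [:: c; d; hl; hr] ++ [seq fi i c | i <- enum 'I_n]
                    ++ [seq fi i d | i <- enum 'I_n].

(* one-sided endpoints a_1^+, a_2^-, a_2^+, ..., a_{n+2}^- *)
Definition is_endpt (p : pt) : bool :=
  [&& p.1 \in Evals, ~~ ((p.1 == c) && ~~ p.2) & ~~ ((p.1 == d) && p.2)].

(* turning / discontinuity points: the interior endpoints a_2..a_{n+1} *)
Definition is_turning (x : R) : bool := (x \in Evals) && (c < x < d).

Definition forward_orbit (p : pt) : set pt :=
  [set p' | exists k, iterF k p = Some p'].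

Definition orbit_points : set pt :=
  [set p | exists2 e, is_endpt e & forward_orbit e p].

Definition ltpt (p p' : pt) : bool :=
  (p.1 < p'.1) || [&& p.1 == p'.1, ~~ p.2 & p'.2].

Variable ys : seq pt.   (* y^(1), ..., y^(q) in order (0-based) *)
Variable beta : R.

Definition qq : nat := size ys.
Definition yp (i : nat) : pt := nth (0, false) ys i.

(* the cut points (values of the y's) and the intervals J_j = [Jlo j, Jhi j] *)
Definition vals : seq R := undup [seq p.1 | p <- ys].
Definition mm : nat := (size vals).-1.
Definition Jlo (j : nat) : R := nth 0 vals j.
Definition Jhi (j : nat) : R := nth 0 vals j.+1.
Definition intJ (j : nat) : set R := [set x | Jlo j < x < Jhi j].

Definition lap_of_J (j : nat) : option 'I_n :=
  [pick k | `[< intJ j `<=` lap k >] ].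

(* Q_beta = [a_ij |F'|_{J_j}|^{-beta}],  a_ij = 1 iff F(int J_j) ⊇ int J_i *)
Definition Qmx : 'M[R]_mm :=
  \matrix_(i, j)
    match lap_of_J j with
    | Some k => if `[< intJ i `<=` Finv k @` intJ j >]
                then `|(rho k)^-1| `^ (- beta) else 0
    | None => 0
    end.

(* border map: dJ_j = (upper endpoint)^- - (lower endpoint)^+ *)
Definition Bmx : 'M[R]_(qq, mm) :=
  \matrix_(i, j)
    if yp i == (Jlo j, true) then -1
    else if yp i == (Jhi j, false) then 1 else 0.

Definition pairfirst (r : nat) : bool :=
  [&& r.+1 < qq, (yp r).2 == false, yp r.+1 == ((yp r).1, true)
    & is_turning (yp r).1]%N.
Definition pairsecond (r : nat) : bool := (0 < r)%N && pairfirst r.-1.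

Definition Vmx : 'M[R]_qq :=
  \matrix_(r, j)
    match Fpt (yp j) with
    | Some p' =>
      if p' \in ys then
        let i := index p' ys in
        let v := Num.sg (Fder (yp j)) * `|Fder (yp j)| `^ (- beta) in
        if (j < i)%N then
          (if pairfirst r && (j <= r < i)%N then v
           else if pairsecond r && (j <= r.-1 < i)%N then - v
           else if nat_of_ord r == i then v else 0)
        else if (i < j)%N then
          (if pairsecond r && (i < r <= j)%N then v
           else if pairfirst r && (i < r.+1 <= j)%N then - v
           else if nat_of_ord r == i then v else 0)
        else (if nat_of_ord r == i then v else 0)
      else 0
    | None => 0
    end.

End HoleIFS.

(* F maps every lap f_i(I) affinely onto I, so it sends each one-sided endpoint
   to c^+ or d^-: the points y^(r) are exactly the one-sided endpoints, namely
   y^(2j) = v_j^+ and y^(2j+1) = v_(j+1)^- for the cut points c = v_0 < ... < v_m = d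
   (rows and columns are counted from 0).  No endpoint lies inside a lap, so every
   lap is a single interval J_j, which F maps onto I.  Hence column j of Q_beta is
   constant, equal to |F'|_(J_j)|^-beta if J_j is a lap and to 0 otherwise, and
   entry (r, j) of B Q_beta is (-1)^(r+1) times it.  Entry (r, j) of V_beta B is
   the difference of the columns of V_beta at the two ends of J_j.  They vanish
   unless J_j is a lap; then the ends are mapped to c^+ and d^-, whose columns
   carry alternating signs on complementary ranges of rows, and the difference is
   again (-1)^(r+1)|F'|_(J_j)|^-beta, the sign of F' accounting for orientation. *)

From Pilot Require Import Defs.
From HB Require Import structures.
From mathcomp Require Import all_boot all_order all_algebra.
From mathcomp Require Import all_classical all_reals all_analysis.
From mathcomp Require Import zify lra.
Import Order.TTheory GRing.Theory Num.Theory numFieldNormedType.Exports.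
Local Open Scope ring_scope.
Local Open Scope classical_set_scope.

Lemma oitv_overlap {R : realFieldType} {a b a' b' : R} :
  a < b -> a' < b' -> a < b' -> a' < b -> exists2 y, a < y < b & a' < y < b'.
Proof.
move=> *; case: (leP a a') => ?; case: (leP b b') => ?.
- by exists ((a' + b) / 2); apply/andP; split; lra.
- by exists ((a' + b') / 2); apply/andP; split; lra.
- by exists ((a + b) / 2); apply/andP; split; lra.
- by exists ((a + b') / 2); apply/andP; split; lra.
Qed.

Lemma pick_preimage {T : finType} {U : eqType} {f : T -> U} {x : U} {k : T} :
  injective f -> [pick i | x == f i] = Some k <-> x = f k.
Proof.
move=> f_inj; case: pickP => [i /eqP -> | /(_ k) /negbT /eqP]; last by split.
by split=> [[<-] | /f_inj ->].
Qed.

Lemma alt_sign_split {R : ringType} (a b : nat) :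
  (if (a < b)%N then (-1) ^+ b.+1 else 0) - (if (b <= a)%N then (-1) ^+ b else 0)
  = (-1) ^+ b.+1 :> R.
Proof. by case: leqP => _; rewrite ?exprS ?subr0 ?sub0r ?mulN1r. Qed.

Lemma ltpt_irr {R : realType} : irreflexive (@ltpt R).
Proof. by case=> x []; rewrite /ltpt /= ltxx ?andbF. Qed.

Lemma ltpt_trans {R : realType} : transitive (@ltpt R).
Proof.
case=> y b [x a] [z e]; rewrite /ltpt /=.
case/orP=> [lt_xy|/and3P[/eqP -> _ yb]]; case/orP=> [lt_yz|/and3P[/eqP <- nyb _]].
- by rewrite (lt_trans lt_xy lt_yz).
- by rewrite lt_xy.
- by rewrite lt_yz.
- by rewrite yb in nyb.
Qed.

(** * Laps and endpoints *)

Section HoleIFS.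
Variables (R : realType) (n : nat) (rho varrho : 'I_n -> R) (c d hl hr : R).

Local Notation fi := (fi rho varrho).
Local Notation Finv := (Finv rho varrho).
Local Notation lap := (lap rho varrho c d).
Local Notation lapmin := (lapmin rho varrho c d).
Local Notation lapmax := (lapmax rho varrho c d).
Local Notation Evals := (Evals rho varrho c d hl hr).

Hypotheses (rho_neq0 : forall i, rho i != 0) (hl_lt_hr : hl < hr)
  (I_cover : Iset c d = hole hl hr `|` \bigcup_(i in setT) lap i)
  (lap_interiorsI : forall i j, i != j -> interior (lap i) `&` interior (lap j) = set0)
  (hole_lapI : forall i, hole hl hr `&` lap i = set0).

Lemma fiK i : cancel (fi i) (Finv i).
Proof. by move=> x; rewrite /Defs.fi /Defs.Finv addrK mulrAC divff ?mul1r. Qed.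

Lemma FinvK i : cancel (Finv i) (fi i).
Proof. by move=> x; rewrite /Defs.fi /Defs.Finv mulrC divfK // subrK. Qed.

Lemma fi_ltE i a b : (fi i a < fi i b) = if 0 < rho i then a < b else b < a.
Proof.
rewrite /Defs.fi ltrD2r; case: ifPn => [/ltr_pM2l -> // | ].
by rewrite -leNgt le_eqVlt (negbTE (rho_neq0 i)) => /ltr_nM2l ->.
Qed.

Lemma fi_leE i a b : (fi i a <= fi i b) = if 0 < rho i then a <= b else b <= a.
Proof. by rewrite !leNgt fi_ltE; case: ifP. Qed.

Lemma hole_subI {x} : hl < x < hr -> c <= x <= d.
Proof. by move=> hx; have : Iset c d x by rewrite I_cover; left. Qed.

Lemma lap_subI {i x} : lap i x -> c <= x <= d.
Proof. by move=> hx; have : Iset c d x by rewrite I_cover; right; exists i. Qed.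

Lemma c_le_hl : c <= hl.
Proof.
rewrite leNgt; apply/negP => hl_lt_c; have lt_h := hl_lt_hr.
have [y y_hole /andP[_ y_lt_c]] :=
  @oitv_overlap _ hl hr (hl - 1) c lt_h ltac:(lra) hl_lt_c ltac:(lra).
by have /andP[+ _] := hole_subI y_hole; rewrite leNgt y_lt_c.
Qed.

Lemma hr_le_d : hr <= d.
Proof.
rewrite leNgt; apply/negP => d_lt_hr; have lt_h := hl_lt_hr.
have [y y_hole /andP[d_lt_y _]] :=
  @oitv_overlap _ hl hr d (hr + 1) lt_h ltac:(lra) ltac:(lra) d_lt_hr.
by have /andP[_ +] := hole_subI y_hole; rewrite leNgt d_lt_y.
Qed.

Lemma c_lt_d : c < d.
Proof. by have := c_le_hl; have := hr_le_d; have := hl_lt_hr; lra. Qed.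

Lemma lapminE i : lapmin i = fi i (if 0 < rho i then c else d).
Proof.
have := ltW c_lt_d; rewrite /Defs.lapmin.
by case: ifP => pos cd; [apply: min_l | apply: min_r]; rewrite fi_leE pos.
Qed.

Lemma lapmaxE i : lapmax i = fi i (if 0 < rho i then d else c).
Proof.
have := ltW c_lt_d; rewrite /Defs.lapmax.
by case: ifP => pos cd; [apply: max_r | apply: max_l]; rewrite fi_leE pos.
Qed.

Lemma lapmin_lt_lapmax i : lapmin i < lapmax i.
Proof. by rewrite lapminE lapmaxE fi_ltE; case: (0 < rho i); exact: c_lt_d. Qed.

Lemma lap_oitv_fi i y : (lapmin i < fi i y < lapmax i) = (c < y < d).
Proof. by rewrite lapminE lapmaxE !fi_ltE; case: (0 < rho i); rewrite // andbC. Qed.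

Lemma lap_citv_fi i y : (lapmin i <= fi i y <= lapmax i) = (c <= y <= d).
Proof. by rewrite lapminE lapmaxE !fi_leE; case: (0 < rho i); rewrite // andbC. Qed.

Lemma lapE i x : lap i x <-> lapmin i <= x <= lapmax i.
Proof.
rewrite -[x](FinvK i) lap_citv_fi.
by split=> [[y Iy /(can_inj (fiK i)) <-] // | ?]; exists (Finv i x).
Qed.

Lemma lap_interior i x : lapmin i < x < lapmax i -> interior (lap i) x.
Proof.
move=> x_in; have : `]lapmin i, lapmax i[ `<=` interior (lap i).
  rewrite -open_subsetE; last exact: itv_open.
  by move=> y /=; rewrite in_itv /= => /andP[? ?]; apply/lapE; rewrite !ltW.
by apply; rewrite /= in_itv.
Qed.

Lemma lap_oitv_unique {i k x} :
  lapmin i < x < lapmax i -> lapmin k < x < lapmax k -> i = k.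
Proof.
move=> x_i x_k; apply/eqP/negPn/negP => /lap_interiorsI.
by rewrite -subset0 => /(_ x); apply; split; apply: lap_interior.
Qed.

Lemma lapmin_inj : injective lapmin.
Proof.
move=> i k e; have lt_i := lapmin_lt_lapmax i; have lt_k := lapmin_lt_lapmax k.
have [y y_i y_k] := oitv_overlap lt_i lt_k ltac:(by rewrite e) ltac:(by rewrite -e).
exact: lap_oitv_unique y_i y_k.
Qed.

Lemma lapmax_inj : injective lapmax.
Proof.
move=> i k e; have lt_i := lapmin_lt_lapmax i; have lt_k := lapmin_lt_lapmax k.
have [y y_i y_k] := oitv_overlap lt_i lt_k ltac:(by rewrite -e) ltac:(by rewrite e).
exact: lap_oitv_unique y_i y_k.
Qed.

Lemma hole_lap_oitvI i {y} : hl < y < hr -> lapmin i < y < lapmax i -> False.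
Proof.
move=> y_hole y_i; have := hole_lapI i; rewrite -subset0 => /(_ y); apply.
by split=> //; apply/lapE; case/andP: y_i => *; rewrite !ltW.
Qed.

Lemma lapmin_in_lap i : lap i (lapmin i).
Proof. by apply/lapE; rewrite lexx ltW ?lapmin_lt_lapmax. Qed.

Lemma lapmax_in_lap i : lap i (lapmax i).
Proof. by apply/lapE; rewrite lexx ltW ?lapmin_lt_lapmax. Qed.

Lemma EvalsP x : reflect
  [\/ x = c \/ x = d, x = hl \/ x = hr | exists i, x = lapmin i \/ x = lapmax i]
  (x \in Evals).
Proof.
have fi_c i : fi i c = lapmin i \/ fi i c = lapmax i.
  by rewrite lapminE lapmaxE; case: (0 < rho i); [left|right].
have fi_d i : fi i d = lapmin i \/ fi i d = lapmax i.
  by rewrite lapminE lapmaxE; case: (0 < rho i); [right|left].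
have mem_fc i : fi i c \in [seq fi j c | j <- enum 'I_n].
  by apply/mapP; exists i; rewrite ?mem_enum.
have mem_fd i : fi i d \in [seq fi j d | j <- enum 'I_n].
  by apply/mapP; exists i; rewrite ?mem_enum.
rewrite /Defs.Evals /= !inE mem_cat; apply: (iffP idP).
  case/orP=> [/eqP->|/orP[/eqP->|/orP[/eqP->|/orP[/eqP->|/orP[]/mapP[i _ ->]]]]].
  - by apply: Or31; left.
  - by apply: Or31; right.
  - by apply: Or32; left.
  - by apply: Or32; right.
  - by apply: Or33; exists i.
  - by apply: Or33; exists i.
case=> [[]|[]|[i []]] ->; rewrite ?eqxx /= ?orbT //.
- by rewrite lapminE; case: (0 < rho i); rewrite ?mem_fc ?mem_fd !orbT.
- by rewrite lapmaxE; case: (0 < rho i); rewrite ?mem_fc ?mem_fd !orbT.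
Qed.

Lemma c_in_Evals : c \in Evals.
Proof. by apply/EvalsP/Or31; left. Qed.

Lemma d_in_Evals : d \in Evals.
Proof. by apply/EvalsP/Or31; right. Qed.

Lemma lapmin_in_Evals i : lapmin i \in Evals.
Proof. by apply/EvalsP/Or33; exists i; left. Qed.

Lemma lapmax_in_Evals i : lapmax i \in Evals.
Proof. by apply/EvalsP/Or33; exists i; right. Qed.

Lemma Evals_subI {x} : x \in Evals -> c <= x <= d.
Proof.
move=> x_E; have := c_lt_d; have := c_le_hl; have := hr_le_d; have := hl_lt_hr.
case/EvalsP: x_E => [[]|[]|[i []]] -> *; try by apply/andP; split; lra.
- exact: lap_subI (lapmin_in_lap i).
- exact: lap_subI (lapmax_in_lap i).
Qed.

Lemma Evals_notin_lap {x} k : x \in Evals -> ~~ (lapmin k < x < lapmax k).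
Proof.
have lt_k := lapmin_lt_lapmax k; have lt_h := hl_lt_hr.
case/EvalsP => [[]|[]|[i []]] ->; apply/negP => /andP[lo_x x_hi].
- by have /andP[+ _] := lap_subI (lapmin_in_lap k); rewrite leNgt lo_x.
- by have /andP[_ +] := lap_subI (lapmax_in_lap k); rewrite leNgt x_hi.
- have [y y_hole y_k] := oitv_overlap lt_h lt_k x_hi ltac:(lra).
  exact: hole_lap_oitvI y_hole y_k.
- have [y y_hole y_k] := oitv_overlap lt_h lt_k ltac:(lra) lo_x.
  exact: hole_lap_oitvI y_hole y_k.
- have lt_i := lapmin_lt_lapmax i.
  have [y y_i y_k] := oitv_overlap lt_i lt_k x_hi ltac:(lra).
  by move: lo_x; rewrite (lap_oitv_unique y_i y_k) ltxx.
- have lt_i := lapmin_lt_lapmax i.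
  have [y y_i y_k] := oitv_overlap lt_i lt_k ltac:(lra) lo_x.
  by move: x_hi; rewrite (lap_oitv_unique y_i y_k) ltxx.
Qed.

Local Notation lap_of_pt := (lap_of_pt rho varrho c d).
Local Notation Fpt := (Fpt rho varrho c d).
Local Notation is_endpt := (is_endpt rho varrho c d hl hr).

Lemma lap_of_right_endpt x :
  x \in Evals -> lap_of_pt (x, true) = [pick i | x == lapmin i].
Proof.
move=> x_E; apply: eq_pick => i /=; rewrite le_eqVlt.
have [<-|_] /= := eqVneq (lapmin i) x; first exact: lapmin_lt_lapmax.
exact/negbTE/Evals_notin_lap.
Qed.

Lemma lap_of_left_endpt x :
  x \in Evals -> lap_of_pt (x, false) = [pick i | x == lapmax i].
Proof.
move=> x_E; apply: eq_pick => i /=; rewrite [x <= _]le_eqVlt.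
have [->|_] /= := eqVneq x (lapmax i); first by rewrite lapmin_lt_lapmax.
exact/negbTE/Evals_notin_lap.
Qed.

Lemma Fpt_right_endpt {x k} : x \in Evals -> lap_of_pt (x, true) = Some k ->
  Fpt (x, true) = Some (if 0 < rho k then (c, true) else (d, false)).
Proof.
move=> x_E x_k; rewrite /Defs.Fpt x_k /=.
move: x_k; rewrite lap_of_right_endpt // => /(pick_preimage lapmin_inj) ->.
by rewrite lapminE fiK; case: (0 < rho k).
Qed.

Lemma Fpt_left_endpt {x k} : x \in Evals -> lap_of_pt (x, false) = Some k ->
  Fpt (x, false) = Some (if 0 < rho k then (d, false) else (c, true)).
Proof.
move=> x_E x_k; rewrite /Defs.Fpt x_k /=.
move: x_k; rewrite lap_of_left_endpt // => /(pick_preimage lapmax_inj) ->.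
by rewrite lapmaxE fiK; case: (0 < rho k).
Qed.

Lemma is_endptE x b :
  is_endpt (x, b) = (x \in Evals) && (x != if b then d else c).
Proof. by case: b; rewrite /Defs.is_endpt /= ?andbT ?andbF /= ?andbT. Qed.

Lemma endpt_c : is_endpt (c, true).
Proof. by rewrite is_endptE c_in_Evals lt_eqF ?c_lt_d. Qed.

Lemma endpt_d : is_endpt (d, false).
Proof. by rewrite is_endptE d_in_Evals gt_eqF ?c_lt_d. Qed.

Lemma Fpt_endpt {p p'} :
  is_endpt p -> Fpt p = Some p' -> p' = (c, true) \/ p' = (d, false).
Proof.
case: p => x b; rewrite is_endptE => /andP[x_E _].
case E: (lap_of_pt (x, b)) => [k|]; last by rewrite /Defs.Fpt E.
case: b E => E.
- by rewrite (Fpt_right_endpt x_E E) => -[<-]; case: (0 < rho k); [left|right].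
- by rewrite (Fpt_left_endpt x_E E) => -[<-]; case: (0 < rho k); [right|left].
Qed.

Lemma iterF_endpt {k e p} :
  is_endpt e -> iterF rho varrho c d k e = Some p -> is_endpt p.
Proof.
move=> e_end; elim: k p => [|k IHk] p /=; first by case=> <-.
rewrite /Defs.iterF /= -/(iterF rho varrho c d k e).
case E: (iterF _ _ _ _ k e) => [q|] //= /(Fpt_endpt (IHk q E)) [] ->;
  [exact: endpt_c | exact: endpt_d].
Qed.

(** * The points y^(r) and the intervals J_j *)

Variable ys : seq (R * bool).
Hypotheses (ys_sorted : sorted (@ltpt R) ys)
  (ys_orbits : forall p, p \in ys <-> orbit_points rho varrho c d hl hr p).

Lemma mem_ys p : (p \in ys) = is_endpt p.
Proof.
apply/idP/idP => [/ys_orbits [e e_end [k /(iterF_endpt e_end)]] // | p_end].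
by apply/ys_orbits; exists p => //; exists 0%N.
Qed.

Local Notation vals := (vals ys).
Local Notation mm := (mm ys).
Local Notation cut j := (nth 0 vals j).

Lemma mem_vals x : (x \in vals) = (x \in Evals).
Proof.
rewrite /Defs.vals mem_undup; apply/mapP/idP => [[[y b]] | x_E].
  by rewrite mem_ys is_endptE => /andP[y_E _] ->.
(* x^+ is an endpoint unless x = d, and then x^- is one *)
exists (x, x != d) => //; rewrite mem_ys is_endptE x_E /=.
by case: (eqVneq x d) => [->|] //=; rewrite gt_eqF ?c_lt_d.
Qed.

Lemma vals_sorted : sorted <%R vals.
Proof.
rewrite lt_sorted_uniq_le undup_uniq /=.
apply: (subseq_sorted le_trans (undup_subseq _)).
rewrite sorted_map; apply: sub_sorted ys_sorted => -[x a] [y b].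
by rewrite /ltpt /= => /orP[/ltW // | /and3P[/eqP -> _ _]].
Qed.

Lemma size_vals : size vals = mm.+1.
Proof.
rewrite /Defs.mm prednK // lt0n size_eq0; apply/eqP => vals_nil.
by have := c_in_Evals; rewrite -mem_vals vals_nil.
Qed.

Lemma cut_ltE {i j} : (i <= mm)%N -> (j <= mm)%N -> (cut i < cut j) = (i < j)%N.
Proof. by move=> *; rewrite (lt_sorted_ltn_nth 0 vals_sorted) // inE size_vals. Qed.

Lemma cut_leE {i j} : (i <= mm)%N -> (j <= mm)%N -> (cut i <= cut j) = (i <= j)%N.
Proof. by move=> *; rewrite (lt_sorted_leq_nth 0 vals_sorted) // inE size_vals. Qed.

Lemma cut_eqE {i j} : (i <= mm)%N -> (j <= mm)%N -> (cut i == cut j) = (i == j).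
Proof. by move=> *; rewrite nth_uniq ?size_vals ?undup_uniq. Qed.

Lemma cut_in_Evals {j} : (j <= mm)%N -> cut j \in Evals.
Proof. by move=> j_le; rewrite -mem_vals mem_nth ?size_vals. Qed.

Lemma Evals_cut {x} : x \in Evals -> exists2 t, (t <= mm)%N & x = cut t.
Proof.
rewrite -mem_vals => x_in; exists (index x vals); last by rewrite nth_index.
by rewrite -ltnS -size_vals index_mem.
Qed.

Lemma cut0 : cut 0 = c.
Proof.
have [t t_le c_t] := Evals_cut c_in_Evals.
have /andP[c_le _] := Evals_subI (cut_in_Evals (leq0n mm)).
by apply: le_anti; rewrite c_le andbT c_t cut_leE.
Qed.

Lemma cut_mm : cut mm = d.
Proof.
have [t t_le d_t] := Evals_cut d_in_Evals.
have /andP[_ le_d] := Evals_subI (cut_in_Evals (leqnn mm)).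
by apply: le_anti; rewrite le_d d_t cut_leE.
Qed.

Definition lapidx k := index (lapmin k) vals.

Lemma lapmin_cut k : lapmin k = cut (lapidx k).
Proof. by rewrite nth_index // mem_vals lapmin_in_Evals. Qed.

Lemma lapidx_lt k : (lapidx k < mm)%N.
Proof.
have idx_le : (lapidx k <= mm)%N.
  by rewrite -ltnS -size_vals index_mem mem_vals lapmin_in_Evals.
have /andP[_ max_le] := lap_subI (lapmax_in_lap k).
rewrite -(cut_ltE idx_le (leqnn mm)) -lapmin_cut cut_mm.
exact: lt_le_trans (lapmin_lt_lapmax k) max_le.
Qed.

Lemma lapmax_cut k : lapmax k = cut (lapidx k).+1.
Proof.
have [b b_le max_b] := Evals_cut (lapmax_in_Evals k).
have a_lt := lapidx_lt k; have a_le := ltnW a_lt.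
have a_lt_b : (lapidx k < b)%N.
  by rewrite -(cut_ltE a_le b_le) -lapmin_cut -max_b lapmin_lt_lapmax.
rewrite max_b; congr nth; apply/eqP; rewrite eqn_leq a_lt_b andbT leqNgt.
apply/negP => a1_lt_b; have := Evals_notin_lap k (cut_in_Evals a_lt).
by rewrite lapmin_cut max_b !cut_ltE // ltnSn a1_lt_b.
Qed.

Local Notation lap_of_J := (lap_of_J rho varrho c d ys).

Lemma intJ_sub_lapE {j} k : (j < mm)%N -> intJ ys j `<=` lap k <-> lapidx k = j.
Proof.
move=> j_lt; have j_le := ltnW j_lt; rewrite /intJ /Jlo /Jhi.
split=> [sub | <- x /andP[lo_x x_hi]]; last first.
  by apply/lapE; rewrite lapmin_cut lapmax_cut !ltW.
have lt_j : cut j < cut j.+1 by rewrite cut_ltE.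
have /lapE := sub ((cut j + cut j.+1) / 2) ltac:(rewrite /=; apply/andP; split; lra).
rewrite lapmin_cut lapmax_cut => /andP[a_le a1_ge].
have a_lt := lapidx_lt k; have a_le' := ltnW a_lt.
have : cut (lapidx k) < cut j.+1 by lra.
have : cut j < cut (lapidx k).+1 by lra.
rewrite !cut_ltE //; lia.
Qed.

Lemma lap_of_J_pick j : (j < mm)%N -> lap_of_J j = [pick k | lapidx k == j].
Proof.
by move=> j_lt; apply: eq_pick => k /=; apply/asboolP/eqP => /(intJ_sub_lapE k j_lt).
Qed.

Lemma lap_of_lower_cut j : (j < mm)%N -> lap_of_pt (cut j, true) = lap_of_J j.
Proof.
move=> j_lt; have j_le := ltnW j_lt.
rewrite lap_of_J_pick // lap_of_right_endpt ?cut_in_Evals //.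
by apply: eq_pick => k /=; rewrite lapmin_cut cut_eqE ?(ltnW (lapidx_lt k)) // eq_sym.
Qed.

Lemma lap_of_upper_cut j : (j < mm)%N -> lap_of_pt (cut j.+1, false) = lap_of_J j.
Proof.
move=> j_lt; rewrite lap_of_J_pick // lap_of_left_endpt ?cut_in_Evals //.
by apply: eq_pick => k /=; rewrite lapmax_cut cut_eqE ?lapidx_lt // eqSS eq_sym.
Qed.

Definition endpt_nth (r : nat) : R * bool :=
  if odd r then (cut r./2.+1, false) else (cut r./2, true).

Lemma endpt_nth_sorted : sorted (@ltpt R) (mkseq endpt_nth mm.*2).
Proof.
apply/(sortedP (0, false)) => r; rewrite size_mkseq => r_lt.
rewrite !nth_mkseq ?(ltnW r_lt) // /endpt_nth /=.
case: (boolP (odd r)) => odd_r /=.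
  have -> : uphalf r = r./2.+1 by lia.
  by rewrite /ltpt /= eqxx orbT.
have -> : uphalf r = r./2 by lia.
by rewrite /ltpt /= cut_ltE ?ltnSn //; lia.
Qed.

Lemma endpt_nth_endpt r : (r < mm.*2)%N -> is_endpt (endpt_nth r).
Proof.
move=> r_lt; rewrite /endpt_nth; case: ifP => odd_r; rewrite is_endptE.
  have r2_le : (r./2.+1 <= mm)%N by lia.
  by rewrite cut_in_Evals // -cut0 cut_eqE.
have r2_lt : (r./2 < mm)%N by lia.
have r2_le := ltnW r2_lt.
by rewrite cut_in_Evals // -cut_mm cut_eqE // ltn_eqF.
Qed.

Lemma ys_endpt_nth : ys = mkseq endpt_nth mm.*2.
Proof.
apply: (irr_sorted_eq ltpt_trans ltpt_irr ys_sorted endpt_nth_sorted) => p.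
rewrite mem_ys /mkseq; apply/idP/mapP => [|[r]]; last first.
  by rewrite mem_iota add0n => /andP[_ r_lt] ->; apply: endpt_nth_endpt.
case: p => x b; rewrite is_endptE => /andP[x_E x_ne].
have [t t_le x_t] := Evals_cut x_E; case: b x_ne => x_ne.
  have t_lt : (t < mm)%N.
    rewrite ltn_neqAle t_le andbT.
    by apply: contraNneq x_ne => t_mm; rewrite x_t t_mm cut_mm.
  exists t.*2; first by rewrite mem_iota; lia.
  by rewrite /endpt_nth odd_double doubleK x_t.
have t_gt0 : (0 < t)%N.
  by rewrite lt0n; apply: contraNneq x_ne => t0; rewrite x_t t0 cut0.
exists t.-1.*2.+1; first by rewrite mem_iota; lia.
by rewrite /endpt_nth /= odd_double uphalf_double prednK // x_t.
Qed.

Local Notation qq := (qq ys).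
Local Notation yp := (yp ys).

Lemma qqE : qq = mm.*2.
Proof. by rewrite /Defs.qq {1}ys_endpt_nth size_mkseq. Qed.

Lemma yp_endpt_nth {r} : (r < mm.*2)%N -> yp r = endpt_nth r.
Proof. by move=> r_lt; rewrite /Defs.yp {1}ys_endpt_nth nth_mkseq. Qed.

Lemma mm_gt0 : (0 < mm)%N.
Proof. by rewrite -(cut_ltE (leq0n mm) (leqnn mm)) cut0 cut_mm c_lt_d. Qed.

Lemma index_yp r : (r < qq)%N -> index (yp r) ys = r.
Proof. by move=> r_lt; rewrite index_uniq // (sorted_uniq ltpt_trans ltpt_irr). Qed.

Lemma index_c : index (c, true) ys = 0%N.
Proof.
have lt0 : (0 < mm.*2)%N by rewrite double_gt0 mm_gt0.
by rewrite -cut0 -[(cut 0, true)]/(endpt_nth 0) -(yp_endpt_nth lt0) index_yp ?qqE.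
Qed.

Lemma index_d : index (d, false) ys = (mm.*2).-1.
Proof.
have lt_mm2 : ((mm.*2).-1 < mm.*2)%N by have := mm_gt0; lia.
have -> : (d, false) = endpt_nth (mm.*2).-1.
  rewrite /endpt_nth; have -> : odd (mm.*2).-1 by have := mm_gt0; lia.
  have -> : ((mm.*2).-1)./2.+1 = mm by have := mm_gt0; lia.
  by rewrite cut_mm.
by rewrite -(yp_endpt_nth lt_mm2) index_yp ?qqE.
Qed.

Lemma pairfirstE r :
  pairfirst rho varrho c d hl hr ys r = odd r && (r.+1 < mm.*2)%N.
Proof.
rewrite /Defs.pairfirst qqE; case: ltnP => r1_lt; last by rewrite andbF.
rewrite (yp_endpt_nth (ltnW r1_lt)) (yp_endpt_nth r1_lt) /endpt_nth /=.
case: (boolP (odd r)) => //= odd_r.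
have -> : uphalf r = r./2.+1 by lia.
have r2_lt : (r./2.+1 < mm)%N by lia.
have r2_le := ltnW r2_lt.
by rewrite eqxx /Defs.is_turning cut_in_Evals //= -cut0 -cut_mm !cut_ltE.
Qed.

Lemma pairsecondE r :
  pairsecond rho varrho c d hl hr ys r = [&& 0 < r, ~~ odd r & r < mm.*2]%N.
Proof. by rewrite /Defs.pairsecond; case: r => [|r] //=; rewrite pairfirstE negbK. Qed.

(** * Entries of B, Q_beta and V_beta *)

Variable beta : R.

Local Notation Fder := (Fder rho varrho c d).
Local Notation Bmx := (Bmx ys).
Local Notation Qmx := (Qmx rho varrho c d ys beta).
Local Notation Vmx := (Vmx rho varrho c d hl hr ys beta).

Definition qweight j : R :=
  if lap_of_J j is Some k then `|(rho k)^-1| `^ (- beta) else 0.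

Definition vweight s : R := Num.sg (Fder (yp s)) * `|Fder (yp s)| `^ (- beta).

Lemma lap_of_J_Some {j k} : (j < mm)%N -> lap_of_J j = Some k -> lapidx k = j.
Proof.
move=> j_lt; rewrite /Defs.lap_of_J.
by case: pickP => // k' /asboolP /(intJ_sub_lapE k' j_lt) <- [->].
Qed.

Lemma Qmx_entry (i j : 'I_mm) : Qmx i j = qweight j.
Proof.
rewrite mxE /qweight; case E: (lap_of_J j) => [k|] //; rewrite asboolT //.
have <- := lap_of_J_Some (ltn_ord j) E.
move=> x; rewrite /intJ /Jlo /Jhi /= => /andP[lo_x x_hi].
exists (fi k x); last exact: fiK.
have /andP[c_le _] := Evals_subI (cut_in_Evals (ltnW (ltn_ord i))).
have /andP[_ le_d] := Evals_subI (cut_in_Evals (ltn_ord i)).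
by rewrite /= -lapmin_cut -lapmax_cut lap_oitv_fi; apply/andP; split; lra.
Qed.

Lemma Bmx_entry (s : 'I_qq) (j : 'I_mm) :
  Bmx s j = if s./2 == j :> nat then (-1) ^+ s.+1 else 0.
Proof.
have s_lt : (s < mm.*2)%N by rewrite -qqE.
have j_lt := ltn_ord j; have j_le := ltnW j_lt.
rewrite mxE (yp_endpt_nth s_lt) /endpt_nth /Jlo /Jhi -signr_odd /=.
case: (boolP (odd s)) => odd_s; rewrite !xpair_eqE /= ?andbT ?andbF.
  have s2_le : (s./2.+1 <= mm)%N by lia.
  by rewrite cut_eqE // eqSS.
have s2_le : (s./2 <= mm)%N by lia.
by rewrite cut_eqE //; case: eqP.
Qed.

(* c^+ = y^(0) and d^- = y^(q-1); the pair rule of V_beta spreads the entry of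
   column s over the rows between y^(s) and its image, with alternating signs. *)
Lemma Vmx_col_c (r : 'I_qq) {s : 'I_qq} : Fpt (yp s) = Some (c, true) ->
  Vmx r s = vweight s * (if (r <= (s./2).*2)%N then (-1) ^+ r else 0).
Proof.
move=> Fs; rewrite mxE Fs mem_ys endpt_c index_c -/(vweight s).
have r_lt : (r < mm.*2)%N by rewrite -qqE.
have s_lt : (s < mm.*2)%N by rewrite -qqE.
rewrite !pairfirstE !pairsecondE -signr_odd /=.
case: (boolP (odd r)) => odd_r /=; rewrite ?expr0 ?expr1;
  repeat case: ifP => /= ?; rewrite ?mulr0 ?mulr1 ?mulrN1 //; lia.
Qed.

Lemma Vmx_col_d (r : 'I_qq) {s : 'I_qq} : Fpt (yp s) = Some (d, false) ->
  Vmx r s = vweight s * (if ((s./2).*2 < r)%N then (-1) ^+ r.+1 else 0).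
Proof.
move=> Fs; rewrite mxE Fs mem_ys endpt_d index_d -/(vweight s).
have r_lt : (r < mm.*2)%N by rewrite -qqE.
have s_lt : (s < mm.*2)%N by rewrite -qqE.
rewrite !pairfirstE !pairsecondE -signr_odd /=.
case: (boolP (odd r)) => odd_r /=; rewrite ?expr0 ?expr1;
  repeat case: ifP => /= ?; rewrite ?mulr0 ?mulr1 ?mulrN1 //; lia.
Qed.

Lemma Bmx_Qmx_entry r j : (Bmx *m Qmx) r j = (-1) ^+ r.+1 * qweight j.
Proof.
have r_lt : (r < mm.*2)%N by rewrite -qqE.
have half_lt : (r./2 < mm)%N by lia.
rewrite mxE (bigD1 (Ordinal half_lt)) //= big1 ?addr0 => [|i].
  by rewrite Bmx_entry Qmx_entry eqxx.
by rewrite Bmx_entry -val_eqE /= eq_sym => /negbTE ->; rewrite mul0r.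
Qed.

Lemma lower_end_lt (j : 'I_mm) : (j.*2 < qq)%N.
Proof. by rewrite qqE ltn_double. Qed.

Lemma upper_end_lt (j : 'I_mm) : (j.*2.+1 < qq)%N.
Proof. by rewrite qqE -doubleS leq_double. Qed.

Definition lower_end j : 'I_qq := Ordinal (lower_end_lt j).
Definition upper_end j : 'I_qq := Ordinal (upper_end_lt j).

Lemma yp_lower_end j : yp (lower_end j) = (cut j, true).
Proof.
have j2_lt : (j.*2 < mm.*2)%N by rewrite -qqE lower_end_lt.
by rewrite (yp_endpt_nth j2_lt) /endpt_nth odd_double doubleK.
Qed.

Lemma yp_upper_end j : yp (upper_end j) = (cut j.+1, false).
Proof.
have j2_lt : (j.*2.+1 < mm.*2)%N by rewrite -qqE upper_end_lt.
by rewrite (yp_endpt_nth j2_lt) /endpt_nth /= odd_double uphalf_double.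
Qed.

Lemma Vmx_Bmx_ends r j :
  (Vmx *m Bmx) r j = Vmx r (upper_end j) - Vmx r (lower_end j).
Proof.
rewrite mxE (bigD1 (upper_end j)) // (bigD1 (lower_end j)) /=; last first.
  by rewrite -val_eqE /= ltn_eqF.
rewrite big1 ?addr0 => [|i /andP[]]; last first.
  rewrite Bmx_entry -!val_eqE /= => ne_hi ne_lo.
  case: ifP => [/eqP i2|_]; last by rewrite mulr0.
  by move: ne_hi ne_lo; rewrite -i2; lia.
rewrite !Bmx_entry /= uphalf_double doubleK eqxx !exprS.
by rewrite -[(-1) ^+ j.*2]signr_odd odd_double !mulN1r opprK !mulr1 mulrN1.
Qed.

Lemma Vmx_ends_lap r (j : 'I_mm) k : lap_of_J j = Some k ->
  Vmx r (upper_end j) - Vmx r (lower_end j) = (-1) ^+ r.+1 * `|(rho k)^-1| `^ (- beta).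
Proof.
move=> E; have j_lt := ltn_ord j; have j_le := ltnW j_lt.
have lo_k : lap_of_pt (cut j, true) = Some k by rewrite lap_of_lower_cut.
have hi_k : lap_of_pt (cut j.+1, false) = Some k by rewrite lap_of_upper_cut.
have F_lo := Fpt_right_endpt (cut_in_Evals j_le) lo_k.
have F_hi := Fpt_left_endpt (cut_in_Evals j_lt) hi_k.
rewrite -yp_lower_end in F_lo; rewrite -yp_upper_end in F_hi.
have w_lo : vweight (lower_end j) = Num.sg (rho k) * `|(rho k)^-1| `^ (- beta).
  by rewrite /vweight yp_lower_end /Defs.Fder lo_k sgrV.
have w_hi : vweight (upper_end j) = Num.sg (rho k) * `|(rho k)^-1| `^ (- beta).
  by rewrite /vweight yp_upper_end /Defs.Fder hi_k sgrV.
have half_lo : ((lower_end j)./2).*2 = j.*2 by rewrite /= doubleK.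
have half_hi : ((upper_end j)./2).*2 = j.*2 by rewrite /= uphalf_double.
have := rho_neq0 k; rewrite neq_lt => /orP[neg|pos].
  rewrite (lt_gtF neg) in F_lo F_hi.
  rewrite (Vmx_col_d r F_lo) (Vmx_col_c r F_hi) w_lo w_hi half_lo half_hi.
  by rewrite ltr0_sg // mulN1r -mulrBr mulNr -mulrN opprB alt_sign_split mulrC.
rewrite pos in F_lo F_hi.
rewrite (Vmx_col_c r F_lo) (Vmx_col_d r F_hi) w_lo w_hi half_lo half_hi.
by rewrite gtr0_sg // mul1r -mulrBr alt_sign_split mulrC.
Qed.

Lemma Vmx_Bmx_entry r j : (Vmx *m Bmx) r j = (-1) ^+ r.+1 * qweight j.
Proof.
rewrite Vmx_Bmx_ends /qweight; case E: (lap_of_J j) => [k|]; first exact: Vmx_ends_lap.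
rewrite !mxE yp_lower_end yp_upper_end /Defs.Fpt.
by rewrite lap_of_lower_cut // lap_of_upper_cut // E subr0 mulr0.
Qed.

Lemma Bmx_intertwines : Bmx *m Qmx = Vmx *m Bmx.
Proof. by apply/matrixP => r j; rewrite Bmx_Qmx_entry Vmx_Bmx_entry. Qed.

End HoleIFS.

Theorem lemma1 (R : realType) (n : nat) (rho varrho : 'I_n -> R)
    (c d hl hr beta : R) (ys : seq (R * bool)) :
  c <= d ->
  (forall i, 0 < `|rho i| < 1) ->
  open_set_condition rho varrho ->
  hl < hr ->
  Iset c d = hole hl hr `|` \bigcup_(i in setT) lap rho varrho c d i ->
  (forall i j, i != j ->
     interior (lap rho varrho c d i) `&` interior (lap rho varrho c d j) = set0) ->
  (forall i, hole hl hr `&` lap rho varrho c d i = set0) ->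
  (forall e, is_endpt rho varrho c d hl hr e ->
     finite_set (forward_orbit rho varrho c d e)) ->
  sorted (@ltpt R) ys ->
  (forall p, p \in ys <-> orbit_points rho varrho c d hl hr p) ->
  Bmx ys *m Qmx rho varrho c d ys beta
  = Vmx rho varrho c d hl hr ys beta *m Bmx ys.
Proof.
move=> _ rho_bounds _ hl_lt_hr I_cover lap_interiorsI hole_lapI _ ys_sorted ys_orbits.
have rho_neq0 i : rho i != 0 by have /andP[+ _] := rho_bounds i; rewrite normr_gt0.
by apply: Bmx_intertwines.
Qed.
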